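(* Let $Q$ be a square-free word of length $n\geq 2$. Then the number of almost-square factors of $Q$ (counted as occurrences, i.e., as pairs (starting position, length) such that the corresponding factor is an almost-square) is less than $2n\log_{5/4} n$.
   Context: Words are finite sequences of letters. A factor of $Q$ is a contiguous subword. An extension of a word $W$ over an alphabet $\mathbb{A}$ is a word $W_1xW_2$ with $W=W_1W_2$ ($W_1,W_2$ possibly empty) and $x\in\mathbb{A}$. An almost-square is a word of the form $WW'$ where $W'$ is either an extension of $W$ or is obtained by deleting one letter from $W$. A square is a nonempty word of the form $YY$; a word is square-free if none of its factors is a square. *)

From mathcomp Require Import all_boot.
From Stdlib Require Import Reals ClassicalEpsilon.
Set Implicit Arguments. Unset Strict Implicit. Unset Printing Implicit Defensive.

Section Words.
Variable T : Type.

Definition factor (f Q : seq T) : Prop := exists u v, Q = u ++ f ++ v.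

Definition square_free (Q : seq T) : Prop :=
  forall Y : seq T, Y <> [::] -> ~ factor (Y ++ Y) Q.

Definition extension (W W' : seq T) : Prop :=
  exists W1 W2 (x : T), W = W1 ++ W2 /\ W' = W1 ++ x :: W2.

Definition deletion (W W' : seq T) : Prop :=
  exists W1 W2 (x : T), W = W1 ++ x :: W2 /\ W' = W1 ++ W2.

Definition almost_square (U : seq T) : Prop :=
  exists W W', U = W ++ W' /\ (extension W W' \/ deletion W W').

Definition almost_squareb (U : seq T) : bool :=
  if excluded_middle_informative (almost_square U) then true else false.

Definition almost_square_count (Q : seq T) : nat :=
  let n := size Q in
  size [seq p <- [seq (i, l) | i <- iota 0 n, l <- iota 1 n]
          | (p.1 + p.2 <= n) && almost_squareb (take p.2 (drop p.1 Q))].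
End Words.

(* Fix a start position i.  An almost-square W W' of length 2m+1 at i, with
   W = W1 W2 and the letter x inserted into (or deleted from) W after W1, says
   that the block W1 recurs at one distance (m or m+1) and the block W2 at the
   other.  In a square-free word two recurrences at distances d1 < d2 on a
   common block of length p are only possible if p < d2 - d1, for otherwise
   they produce a square of period d2 - d1.  Comparing the recurrences of two
   almost-squares at i of half-lengths m < m' in this way gives m' >= 2m for
   gapped squares u x u and 3m' >= 4m for the other insertions and deletions.
   So at most 1 + log_2 n + 2 log_{4/3} (2n/3) < 2 log_{5/4} n almost-squares
   start at i, and there are n start positions. *)

From mathcomp Require Import all_boot zify boolp.
From Stdlib Require Import ClassicalEpsilon.
Set Implicit Arguments. Unset Strict Implicit. Unset Printing Implicit Defensive.

Lemma count_predU_le (S : Type) (P1 P2 : pred S) (s : seq S) :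
  count (predU P1 P2) s <= count P1 s + count P2 s.
Proof. by rewrite -count_predUI leq_addr. Qed.

Lemma lacunary_count (X : pred nat) (b A B : nat) :
  (forall m, X m -> b <= m) ->
  (forall m m', X m -> X m' -> m < m' -> B * m <= A * m') ->
  forall N, 0 < count X (iota 0 N) ->
  exists m, [/\ X m, m < N &
    b * B ^ (count X (iota 0 N)).-1 <= A ^ (count X (iota 0 N)).-1 * m].
Proof.
move=> Xb XAB; elim=> [//|N IH].
rewrite -[N.+1]addn1 iotaD count_cat /= add0n addn0.
case XN: (X N); rewrite /= ?addn0 ?addn1; last first.
  by move=> /IH [m [Xm lt_mN le_m]]; exists m; split => //; lia.
case: (posnP (count X (iota 0 N))) => [-> _|c_gt0].
  by exists N; rewrite /= !expn0 mul1n muln1; split; [|lia|apply: Xb].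
have [m [Xm lt_mN le_m]] := IH c_gt0.
exists N; split => //.
move: c_gt0 (XAB _ _ Xm XN lt_mN) le_m.
case: (count X (iota 0 N)) => [//|c] /= _; rewrite !expnS.
move: (B ^ c) (A ^ c) => Bc Ac; nia.
Qed.

Lemma lacunary_count_ratio2 (X : pred nat) N :
  0 < N -> (forall m, X m -> 0 < m /\ 2 * m < N) ->
  (forall m m', X m -> X m' -> m < m' -> 2 * m <= m') ->
  2 ^ count X (iota 0 N) <= N.
Proof.
move=> N_gt0 XN Xgap; case: (posnP (count X (iota 0 N))) => [-> //|c_gt0].
have [|m m' Xm Xm' lt_mm'|m [/XN [_ lt_mN] _ le_m]] :=
  lacunary_count (b := 1) (A := 1) (B := 2) _ _ c_gt0.
- by move=> m /XN [].
- by rewrite mul1n; apply: Xgap.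
- move: c_gt0 le_m; case: (count X (iota 0 N)) => [//|c] _ /=.
  by rewrite exp1n expnS; lia.
Qed.

Lemma lacunary_count_ratio43 (X : pred nat) N :
  1 < N -> (forall m, X m -> 1 < m /\ 2 * m < N) ->
  (forall m m', X m -> X m' -> m < m' -> 4 * m <= 3 * m') ->
  3 * 4 ^ count X (iota 0 N) <= 2 * 3 ^ count X (iota 0 N) * N.
Proof.
move=> N_gt1 XN Xgap; case: (posnP (count X (iota 0 N))) => [-> |c_gt0].
  by rewrite !expn0; lia.
have [|m [/XN [_ lt_mN] _ le_m]] :=
  lacunary_count (b := 2) (A := 3) (B := 4) _ Xgap c_gt0.
- by move=> m /XN [].
- move: c_gt0 le_m; case: (count X (iota 0 N)) => [//|c] _ /=.
  rewrite !expnS; move: (4 ^ c) (3 ^ c) => Fc Tc; nia.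
Qed.

Section Recurrences.
Variables (T : Type) (w : nat -> T) (n : nat).

Definition shift_eq (s p d : nat) : Prop :=
  forall j, s <= j -> j < s + p -> w j = w (j + d).

Definition square_free_on : Prop :=
  forall s p, 0 < p -> s + 2 * p <= n -> ~ shift_eq s p p.

(* The shapes of an almost-square of length 2m+1 at i, with a = |W1|:
   W1 W2 W1 x W2 and W1 x W2 W1 W2 for 0 < a < m.  For a = 0 and a = m one
   gets either a gapped square u x u or a word containing a square. *)
Definition gapped_square (i m : nat) : Prop :=
  [/\ 0 < m, i + 2 * m < n & shift_eq i m m.+1].

Definition ext_almost_square (i m : nat) : Prop :=
  exists2 a, 0 < a < m &
    [/\ i + 2 * m < n, shift_eq i a m & shift_eq (i + a) (m - a) m.+1].

Definition del_almost_square (i m : nat) : Prop :=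
  exists2 a, 0 < a < m &
    [/\ i + 2 * m < n, shift_eq i a m.+1 & shift_eq (i + a).+1 (m - a) m].

Hypothesis sfw : square_free_on.

Lemma shift_overlap_lt s1 p1 d1 s2 p2 d2 s p :
  shift_eq s1 p1 d1 -> shift_eq s2 p2 d2 ->
  s1 <= s -> s2 <= s -> s + p <= s1 + p1 -> s + p <= s2 + p2 ->
  d1 < d2 -> s + p + d2 <= n -> p < d2 - d1.
Proof.
move=> h1 h2 ? ? ? ? d12 ?; rewrite ltnNge; apply/negP => le_dp.
apply: (sfw (s := s + d1) (p := d2 - d1)); [lia | lia | move=> k ? ?].
have e1 := h1 (k - d1) ltac:(lia) ltac:(lia).
have e2 := h2 (k - d1) ltac:(lia) ltac:(lia).
rewrite (_ : k = k - d1 + d1); last lia.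
by rewrite -e1 e2; congr w; lia.
Qed.

Lemma gapped_square_gap i m m' :
  gapped_square i m -> gapped_square i m' -> m < m' -> 2 * m <= m'.
Proof.
move=> [_ _ h] [_ ? h'] ?.
suff : m < m'.+1 - m.+1 by lia.
by apply: (shift_overlap_lt (s := i) h h'); lia.
Qed.

Lemma ext_almost_square_gap i m m' :
  ext_almost_square i m -> ext_almost_square i m' -> m < m' -> 4 * m <= 3 * m'.
Proof.
move=> [a ? [_ h1 h2]] [a' ? [? h1' h2']] ?.
have c1 : minn a a' < m' - m by apply: (shift_overlap_lt (s := i) h1 h1'); lia.
case: (leqP a a') => aa'.
- have c2 : minn a' m - a < m' - m.+1.
    by apply: (shift_overlap_lt (s := i + a) h2 h1'); lia.
  have c3 : a' < m -> m - a' < m'.+1 - m.+1.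
    by move=> ?; apply: (shift_overlap_lt (s := i + a') h2 h2'); lia.
  case: (ltnP a' m) => [/c3|]; lia.
- have c2 : a - a' < m'.+1 - m.
    by apply: (shift_overlap_lt (s := i + a') h1 h2'); lia.
  have c3 : m - a < m'.+1 - m.+1.
    by apply: (shift_overlap_lt (s := i + a) h2 h2'); lia.
  lia.
Qed.

Lemma del_almost_square_gap i m m' :
  del_almost_square i m -> del_almost_square i m' -> m < m' -> 4 * m <= 3 * m'.
Proof.
move=> [a ? [_ h1 h2]] [a' ? [? h1' h2']] ?.
have c1 : minn a a' < m'.+1 - m.+1.
  by apply: (shift_overlap_lt (s := i) h1 h1'); lia.
case: (leqP a a') => aa'.
- have c2 : a < a' -> minn a' m.+1 - a.+1 < m'.+1 - m.
    by move=> ?; apply: (shift_overlap_lt (s := (i + a).+1) h2 h1'); lia.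
  have c3 : a' <= m -> m - a' < m' - m.
    by move=> ?; apply: (shift_overlap_lt (s := (i + a').+1) h2 h2'); lia.
  case: (leqP a' m) => [/c3|]; case: (ltnP a a') => [/c2|]; lia.
- have c2 : a - a'.+1 < m' - m.+1.
    by apply: (shift_overlap_lt (s := (i + a').+1) h1 h2'); lia.
  have c3 : m - a < m' - m.
    by apply: (shift_overlap_lt (s := (i + a).+1) h2 h2'); lia.
  lia.
Qed.

Definition gapped_squareb i m := `[< gapped_square i m >].
Definition ext_almost_squareb i m := `[< ext_almost_square i m >].
Definition del_almost_squareb i m := `[< del_almost_square i m >].

Lemma gapped_square_count i : 0 < n -> 2 ^ count (gapped_squareb i) (iota 0 n) <= n.
Proof.
move=> n_gt0.
apply: lacunary_count_ratio2 => // [m /asboolP [? ? _]|m m' /asboolP h /asboolP h'].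
  by split; lia.
exact: gapped_square_gap h h'.
Qed.

Lemma ext_almost_square_count i : 1 < n ->
  3 * 4 ^ count (ext_almost_squareb i) (iota 0 n)
    <= 2 * 3 ^ count (ext_almost_squareb i) (iota 0 n) * n.
Proof.
move=> n_gt1.
apply: lacunary_count_ratio43 => // [m /asboolP [a ? [? _ _]]|m m' /asboolP h /asboolP h'].
  by split; lia.
exact: ext_almost_square_gap h h'.
Qed.

Lemma del_almost_square_count i : 1 < n ->
  3 * 4 ^ count (del_almost_squareb i) (iota 0 n)
    <= 2 * 3 ^ count (del_almost_squareb i) (iota 0 n) * n.
Proof.
move=> n_gt1.
apply: lacunary_count_ratio43 => // [m /asboolP [a ? [? _ _]]|m m' /asboolP h /asboolP h'].
  by split; lia.
exact: del_almost_square_gap h h'.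
Qed.

End Recurrences.

Section Factors.
Variables (T : Type) (x0 : T) (Q : seq T).
Local Notation w := (nth x0 Q).
Local Notation n := (size Q).

Lemma nth_cat_size (s1 s2 : seq T) k : nth x0 (s1 ++ s2) (size s1 + k) = nth x0 s2 k.
Proof. by rewrite nth_cat ltnNge leq_addr /= addKn. Qed.

Lemma shift_eq_of_factor i l x u y z s p d :
  take l (drop i Q) = x ++ u ++ y ++ u ++ z ->
  s = i + size x -> p = size u -> d = size u + size y ->
  shift_eq w s p d.
Proof.
move=> eU -> -> -> j /subnKC <-; move: (j - _) => t lt_t.
have : size (take l (drop i Q)) <= l by rewrite size_take_min geq_minl.
rewrite eU !size_cat => le_l.
have nthU k : k < l -> nth x0 (take l (drop i Q)) k = w (i + k).
  by move=> ?; rewrite nth_take // nth_drop.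
rewrite -addnA -addnA -(addnA (size x)) -!nthU; try lia.
rewrite eU !nth_cat_size (addnC t) -size_cat [in RHS]catA nth_cat_size.
by rewrite !nth_cat (_ : t < size u) //; lia.
Qed.

Lemma square_free_on_nth : square_free Q -> square_free_on w n.
Proof.
move=> sfQ s p p_gt0 le_n rec.
set Y := take p (drop s Q).
have sizeY : size Y = p by rewrite size_takel // size_drop; lia.
have YY : take (2 * p) (drop s Q) = Y ++ Y.
  apply: (@eq_from_nth _ x0) => [|t]; first by rewrite size_cat sizeY size_takel ?size_drop; lia.
  rewrite size_takel ?size_drop; last lia.
  move=> lt_t; rewrite nth_take // nth_drop nth_cat sizeY.
  case: ltnP => [lt_tp|le_pt]; first by rewrite nth_take // nth_drop.
  rewrite nth_take ?nth_drop; last lia.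
  by rewrite (rec (s + (t - p))); [congr nth; lia | lia | lia].
apply: (sfQ Y); first by move=> Ynil; move: sizeY; rewrite Ynil /=; lia.
exists (take s Q), (drop (2 * p) (drop s Q)).
by rewrite -YY !cat_take_drop.
Qed.

Lemma almost_squarebP (U : seq T) : reflect (almost_square U) (almost_squareb U).
Proof. by rewrite /almost_squareb; case: excluded_middle_informative => h; constructor. Qed.

Lemma almost_square_factor i l :
  square_free_on w n -> i + l <= n -> almost_square (take l (drop i Q)) ->
  l = 1 \/ exists2 m, l = m.*2.+1 &
    [\/ gapped_square w n i m, ext_almost_square w n i m | del_almost_square w n i m].
Proof.
move=> sfw le_il [W [W' [eU ext_del]]].
have size_l : size (W ++ W') = l by rewrite -eU size_takel // size_drop; lia.
case: ext_del => [[W1 [W2 [x [eW eW']]]]|[W1 [W2 [x [eW eW']]]]];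
  subst W W'; move: size_l; rewrite !size_cat /=;
  set a := size W1; set m := a + size W2; move=> size_l;
  (case: (posnP m) => [m0|m_gt0]; [by left; lia | right; exists m; first lia]).
- have h1 : shift_eq w i a m.
    by apply: (@shift_eq_of_factor i l [::] W1 W2 (x :: W2)); rewrite ?eU -?catA //=; lia.
  have h2 : shift_eq w (i + a) (m - a) m.+1.
    apply: (@shift_eq_of_factor i l W1 W2 (rcons W1 x) [::]); rewrite ?size_rcons; try lia.
    by rewrite eU cats0 -cats1 -!catA.
  case: (posnP a) => [a0|a_gt0].
    by move: h2; rewrite a0 addn0 subn0 => h2; constructor 1; split => //; lia.
  case: (ltnP a m) => [lt_am|le_ma].
    by constructor 2; exists a; [lia | split => //; lia].
  by exfalso; apply: (sfw i m m_gt0); [lia | move=> j ? ?; apply: h1; lia].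
- have h1 : shift_eq w i a m.+1.
    by apply: (@shift_eq_of_factor i l [::] W1 (x :: W2) W2); rewrite ?eU -?catA //=; lia.
  have h2 : shift_eq w (i + a).+1 (m - a) m.
    apply: (@shift_eq_of_factor i l (rcons W1 x) W2 W1 [::]); rewrite ?size_rcons; try lia.
    by rewrite eU cats0 -cats1 -!catA.
  case: (posnP a) => [a0|a_gt0].
    by exfalso; apply: (sfw i.+1 m m_gt0); [lia | move=> j ? ?; apply: h2; lia].
  case: (ltnP a m) => [lt_am|le_ma].
    by constructor 3; exists a; [lia | split => //; lia].
  by constructor 1; split => //; [lia | move=> j ? ?; apply: h1; lia].
Qed.

Definition almost_square_at i l :=
  (i + l <= n) && almost_squareb (take l (drop i Q)).

Lemma almost_square_count_rows :
  almost_square_count Q =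
    sumn [seq count (almost_square_at i) (iota 1 n) | i <- iota 0 n].
Proof.
rewrite /almost_square_count size_filter count_flatten -map_comp.
by congr sumn; apply: eq_map => i /=; rewrite count_map.
Qed.

Lemma almost_square_row_count i : square_free_on w n ->
  count (almost_square_at i) (iota 1 n) <=
  1 + count (gapped_squareb w n i) (iota 0 n) + count (ext_almost_squareb w n i) (iota 0 n)
    + count (del_almost_squareb w n i) (iota 0 n).
Proof.
move=> sfw; set Y := predU (predU (gapped_squareb w n i) (ext_almost_squareb w n i))
                           (del_almost_squareb w n i).
have sub : {subset filter (almost_square_at i) (iota 1 n)
                <= 1 :: [seq m.*2.+1 | m <- filter Y (iota 0 n)]}.
  move=> l; rewrite mem_filter mem_iota.
  move=> /andP [/andP [le_il /almost_squarebP asq] /andP [l_gt0 _]].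
  case: (almost_square_factor sfw le_il asq) => [->|[m l_eq kind]]; rewrite inE ?eqxx //.
  apply/orP; right; apply/mapP; exists m => //.
  rewrite mem_filter mem_iota add0n /Y; apply/andP; split; last lia.
  rewrite /= /gapped_squareb /ext_almost_squareb /del_almost_squareb.
  by case: kind => h; rewrite (asboolT h) ?orbT.
rewrite -size_filter.
apply: leq_trans (uniq_leq_size (filter_uniq _ (iota_uniq 1 n)) sub) _.
rewrite /= size_map size_filter -!addnA add1n ltnS !addnA.
by apply: leq_trans (count_predU_le _ _ _) _; rewrite leq_add2r count_predU_le.
Qed.

End Factors.

(* Imported only now: Reals rebinds [^] on nat to [Nat.pow]. *)
From Stdlib Require Import Reals Lra.
Local Open Scope R_scope.

Lemma ln_le_ln x y : 0 < x -> x <= y -> ln x <= ln y.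
Proof. by move=> x0 [lt_xy|->]; [apply/Rlt_le/ln_increasing | apply: Rle_refl]. Qed.

Lemma ln_div x y : 0 < x -> 0 < y -> ln (x / y) = ln x - ln y.
Proof. by move=> x0 y0; rewrite ln_mult ?ln_Rinv //; apply: Rinv_0_lt_compat. Qed.

Lemma pow_le_ln x y k : 0 < x -> x ^ k <= y -> INR k * ln x <= ln y.
Proof. by move=> x0 le_xy; rewrite -ln_pow //; apply: ln_le_ln => //; apply: pow_lt. Qed.

Lemma pow43_le_ln (e : nat) y :
  0 < y -> 3 * 4 ^ e <= 2 * 3 ^ e * y -> INR e * ln (4 / 3) <= ln y - ln (3 / 2).
Proof.
move=> y0 le_y; rewrite !ln_div; try lra.
have [p3 p4] : 0 < 3 ^ e /\ 0 < 4 ^ e by split; apply: pow_lt; lra.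
have h := ln_le_ln (ltac:(nra) : 0 < 3 * 4 ^ e) le_y.
rewrite !ln_mult in h; try nra.
rewrite !ln_pow in h; lra.
Qed.

Lemma INR_expn (a k : nat) : INR (expn a k) = INR a ^ k.
Proof. by elim: k => [//|k IH]; rewrite expnS mult_INR IH. Qed.

Lemma row_log_bound (n g e d : nat) : 2 <= INR n ->
  2 ^ g <= INR n -> 3 * 4 ^ e <= 2 * 3 ^ e * INR n -> 3 * 4 ^ d <= 2 * 3 ^ d * INR n ->
  INR (1 + g + e + d) < 2 * ln (INR n) / ln (5 / 4).
Proof.
move=> n_ge2 hg he hd.
have L_gt0 : 0 < ln (5 / 4) by rewrite -ln_1; apply: ln_increasing; lra.
have l_ge : ln 2 <= ln (INR n) by apply: ln_le_ln; lra.
have F1 : 3 * ln (5 / 4) <= ln 2.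
  by have := @pow_le_ln (5 / 4) 2 3 ltac:(lra) ltac:(simpl; lra); rewrite /=; lra.
have F2 : 5 * ln (5 / 4) <= 4 * ln (4 / 3).
  have := @pow_le_ln (5 / 4) ((4 / 3) ^ 4) 5 ltac:(lra) ltac:(simpl; lra).
  by rewrite ln_pow /=; lra.
have F3 : 15 * ln (5 / 4) <= 24 * ln (3 / 2).
  have := @pow_le_ln (5 / 4) ((3 / 2) ^ 24) 15 ltac:(lra) ltac:(simpl; lra).
  by rewrite ln_pow /=; lra.
have G := pow_le_ln (ltac:(lra) : 0 < 2) hg.
have E := pow43_le_ln (y := INR n) ltac:(lra) he.
have D := pow43_le_ln (y := INR n) ltac:(lra) hd.
have mulL (k : nat) c x : c * ln (5 / 4) <= x -> INR k * (c * ln (5 / 4)) <= INR k * x.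
  by apply: Rmult_le_compat_l; apply: pos_INR.
have := mulL g _ _ F1; have := mulL e _ _ F2; have := mulL d _ _ F2.
rewrite !plus_INR /= => *.
apply: (Rmult_lt_reg_r (ln (5 / 4))) => //; rewrite /Rdiv Rmult_assoc Rinv_l; lra.
Qed.

Lemma INR_sumn_lt (f : nat -> nat) (s : seq nat) (B : R) :
  s <> [::] -> (forall i, INR (f i) < B) -> INR (sumn (map f s)) < INR (size s) * B.
Proof.
move=> s_neq0 ltB.
have le_sumn r : INR (sumn (map f r)) <= INR (size r) * B.
  elim: r => [|x r IH]; first by rewrite /=; lra.
  by rewrite [sumn _]/= [size _]/= plus_INR S_INR; have := ltB x; lra.
case: s s_neq0 => [//|x s] _; rewrite [sumn _]/= [size _]/= plus_INR S_INR.
by have := ltB x; have := le_sumn s; lra.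
Qed.

Local Close Scope R_scope.

Lemma almost_square_row_lt (T : Type) (x0 : T) (Q : seq T) i :
  (2 <= size Q)%N -> square_free Q ->
  (INR (count (almost_square_at Q i) (iota 1 (size Q)))
     < 2 * ln (INR (size Q)) / ln (5 / 4))%R.
Proof.
move=> n_ge2 sfQ; have sfw := square_free_on_nth (x0 := x0) sfQ.
have le_R a b : a <= b -> (INR a <= INR b)%R by move/leP; apply: le_INR.
have [R2 R3 R4] : [/\ INR 2 = 2%R, INR 3 = 3%R & INR 4 = 4%R] by split; rewrite INR_IZR_INZ.
apply: Rle_lt_trans (le_R _ _ (almost_square_row_count i sfw)) _.
apply: row_log_bound; first by rewrite -R2; apply: le_R.
- by have := le_R _ _ (gapped_square_count sfw i (ltnW n_ge2)); rewrite INR_expn R2.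
- have := le_R _ _ (ext_almost_square_count sfw i n_ge2).
  by rewrite !mult_INR !INR_expn R2 R3 R4.
- have := le_R _ _ (del_almost_square_count sfw i n_ge2).
  by rewrite !mult_INR !INR_expn R2 R3 R4.
Qed.

Theorem mainTheorem7 (T : Type) (Q : seq T) :
  (2 <= size Q)%N -> square_free Q ->
  (INR (almost_square_count Q)
     < 2 * INR (size Q) * (ln (INR (size Q)) / ln (5 / 4)))%R.
Proof.
move=> n_ge2 sfQ.
have [x0 _] : exists x : T, True by case: Q n_ge2 {sfQ} => [|x ?] //; exists x.
rewrite almost_square_count_rows.
have := INR_sumn_lt (s := iota 0 (size Q)) _
  (fun i => almost_square_row_lt x0 i n_ge2 sfQ).
rewrite size_iota => lt_sum; apply: Rlt_le_trans (lt_sum _) _.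
  by case: (size Q) n_ge2.
by apply: Req_le; rewrite /Rdiv; ring.
Qed.
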